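(* Let $H$ be a subgroup of a group $G$, let $W$ be a subset of a finitely generated group $F$ whose commutator subgroup $F'$ has infinite index in $F$, and let $W\ni w\mapsto g_w\in G$ be an arbitrary map. Then the number of homomorphisms $\varphi: F\to G$ such that $\varphi(w)\in Hg_wH$ for all $w\in W$ is divisible by $|H|$.
   Context: Groups need not be finite; divisibility is understood in the sense of cardinal arithmetic: an infinite cardinal is divisible by every nonzero cardinal not exceeding it. *)

From Stdlib Require Import List.
From Stdlib Require Import ssreflect ssrfun.

Record group := Group {
  gcar :> Type;
  gmul : gcar -> gcar -> gcar;
  gone : gcar;
  ginv : gcar -> gcar;
  gmulA : forall x y z, gmul x (gmul y z) = gmul (gmul x y) z;
  gmul1l : forall x, gmul gone x = x;
  gmulVl : forall x, gmul (ginv x) x = gone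
}.

Arguments gmul {g}.
Arguments gone {g}.
Arguments ginv {g}.

Definition is_subgroup {G : group} (H : G -> Prop) : Prop :=
  H gone /\ (forall x y, H x -> H y -> H (gmul x y)) /\ (forall x, H x -> H (ginv x)).

Definition is_hom {F G : group} (phi : F -> G) : Prop :=
  forall x y, phi (gmul x y) = gmul (phi x) (phi y).

Definition in_double_coset {G : group} (H : G -> Prop) (g x : G) : Prop :=
  exists h1 h2, H h1 /\ H h2 /\ x = gmul (gmul h1 g) h2.

Definition generated {G : group} (S : G -> Prop) (x : G) : Prop :=
  forall K : G -> Prop, is_subgroup K -> (forall s, S s -> K s) -> K x.

Definition finitely_generated (G : group) : Prop :=
  exists s : list G, forall x : G, generated (fun y => In y s) x.

Definition commutator {G : group} (a b : G) : G :=
  gmul (gmul (gmul (ginv a) (ginv b)) a) b.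

Definition derived (G : group) : G -> Prop :=
  generated (fun c => exists a b : G, c = commutator a b).

Definition finite_index {G : group} (K : G -> Prop) : Prop :=
  exists s : list G, forall x : G, exists y, In y s /\ K (gmul (ginv y) x).

Definition infinite_index {G : group} (K : G -> Prop) : Prop := ~ finite_index K.

(* cardinal divisibility |A| divides |B|:  |B| = |A| * |C| for some cardinal |C| *)
Definition card_divides (A B : Type) : Prop :=
  exists (C : Type) (f : A * C -> B), bijective f.

(* Since F is finitely generated and F' has infinite index, the relations among the
   generators, viewed in Z^m, form a subgroup of infinite index, hence are killed by a
   nonzero functional.  This yields a homomorphism eps : F -> Z, which after rescaling
   is onto, say eps t = 1, so that F = ker eps ⋊ <t>.
   Call homomorphisms phi and psi linked through h ∈ H when psi = h phi h^-1 on ker eps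
   and psi f ∈ h phi(f) H for every f.  Linking is an equivalence relation preserving the
   double-coset conditions, and every class is a copy of H: if Q ⊆ H is the stabilizer of
   phi and s a chosen representative of h Q, the homomorphism linked to phi through h is
   phi with its value at t multiplied by s^-1 h ∈ Q, conjugated by s. *)

From Stdlib Require Import List ZArith Lia Classical Wf_nat.
From Stdlib Require Import ssreflect ssrfun ssrbool.
From Stdlib Require Import ClassicalEpsilon ProofIrrelevance.
From Stdlib Require Import FunctionalExtensionality PropExtensionality.

Local Notation "x ** y" := (gmul x y) (at level 40, left associativity).
Local Notation "x ^-1" := (ginv x) (at level 3, left associativity, format "x ^-1").
Arguments gmulA {g}.
Arguments gmul1l {g}.
Arguments gmulVl {g}.

Section GroupFacts.
Context {G : group}.
Implicit Types x y z : G.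

Lemma mulgV x : x ** x^-1 = gone.
Proof.
  rewrite -[x ** x^-1]gmul1l -{1}(gmulVl (x ** x^-1)).
  by rewrite -!gmulA (gmulA x^-1 x) gmulVl gmul1l gmulVl.
Qed.

Lemma mulg1 x : x ** gone = x.
Proof. by rewrite -(gmulVl x) gmulA mulgV gmul1l. Qed.

Lemma mulKg x y : x^-1 ** (x ** y) = y.
Proof. by rewrite gmulA gmulVl gmul1l. Qed.

Lemma mulKVg x y : x ** (x^-1 ** y) = y.
Proof. by rewrite gmulA mulgV gmul1l. Qed.

Lemma mulgK x y : y ** x ** x^-1 = y.
Proof. by rewrite -gmulA mulgV mulg1. Qed.

Lemma mulgKV x y : y ** x^-1 ** x = y.
Proof. by rewrite -gmulA gmulVl mulg1. Qed.

Lemma mulgI x y z : x ** y = x ** z -> y = z.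
Proof. by move=> E; rewrite -(mulKg x y) E mulKg. Qed.

Lemma invgK x : x^-1^-1 = x.
Proof. by apply: (mulgI x^-1); rewrite mulgV gmulVl. Qed.

Lemma invg1 : (@gone G)^-1 = gone.
Proof. by rewrite -{2}(gmulVl gone) mulg1. Qed.

Lemma invMg x y : (x ** y)^-1 = y^-1 ** x^-1.
Proof. by apply: (mulgI (x ** y)); rewrite mulgV -gmulA mulKVg mulgV. Qed.

Lemma eq_invg_mul x y : x ** y = gone -> y = x^-1.
Proof. by move=> E; apply: (mulgI x); rewrite E mulgV. Qed.

Fixpoint npow x (n : nat) : G := if n is S n then npow x n ** x else gone.

Definition gpow x (n : Z) : G :=
  if (0 <=? n)%Z then npow x (Z.to_nat n) else npow x^-1 (Z.to_nat (- n)).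

Lemma gpow0 x : gpow x 0 = gone.
Proof. by []. Qed.

Lemma gpow1 x : gpow x 1 = x.
Proof. by rewrite /gpow /= gmul1l. Qed.

Lemma gpowS x n : gpow x (Z.succ n) = gpow x n ** x.
Proof.
  rewrite /gpow; case: (Z.leb_spec 0 n) => n_ge0.
  - have -> : (0 <=? Z.succ n)%Z = true by apply/Z.leb_le; lia.
    by have -> : Z.to_nat (Z.succ n) = S (Z.to_nat n) by lia.
  - case: (Z.leb_spec 0 (Z.succ n)) => Sn_ge0.
    + have -> : n = (-1)%Z by lia.
      by rewrite /= gmul1l gmulVl.
    + have -> : Z.to_nat (- n) = S (Z.to_nat (- Z.succ n)) by lia.
      by rewrite /= mulgKV.
Qed.

Lemma gpowP x n : gpow x (Z.pred n) = gpow x n ** x^-1.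
Proof. by rewrite -{2}(Z.succ_pred n) gpowS mulgK. Qed.

Lemma gpowD x m n : gpow x (m + n) = gpow x m ** gpow x n.
Proof.
  elim/Z.peano_ind: n => [|n IHn|n IHn].
  - by rewrite Z.add_0_r gpow0 mulg1.
  - by rewrite Z.add_succ_r !gpowS IHn gmulA.
  - by rewrite Z.add_pred_r !gpowP IHn gmulA.
Qed.

Lemma gpowSl x n : gpow x (Z.succ n) = x ** gpow x n.
Proof. by rewrite -Z.add_1_l gpowD gpow1. Qed.

Lemma gpowPl x n : gpow x (Z.pred n) = x^-1 ** gpow x n.
Proof. by rewrite -{2}(Z.succ_pred n) gpowSl mulKg. Qed.

Lemma gpowN x n : gpow x (- n) = (gpow x n)^-1.
Proof. by apply: eq_invg_mul; rewrite -gpowD Z.add_opp_diag_r. Qed.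

Definition conjg (h x : G) : G := h ** x ** h^-1.

Lemma conjgM x y z : conjg (x ** y) z = conjg x (conjg y z).
Proof. by rewrite /conjg invMg !gmulA. Qed.

Lemma conjg1 x : conjg gone x = x.
Proof. by rewrite /conjg invg1 gmul1l mulg1. Qed.

Lemma conjgK x y : conjg x^-1 (conjg x y) = y.
Proof. by rewrite -conjgM gmulVl conjg1. Qed.

Lemma conjgKV x y : conjg x (conjg x^-1 y) = y.
Proof. by rewrite -conjgM mulgV conjg1. Qed.

Lemma conjg_fix x y : x ** y = y ** x -> conjg x y = y.
Proof. by move=> E; rewrite /conjg E mulgK. Qed.

End GroupFacts.

Lemma conjg_is_hom {G : group} (h : G) : is_hom (conjg h).
Proof. by move=> x y; rewrite /conjg !gmulA mulgKV. Qed.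

Section Homomorphisms.
Context {F G : group} (phi : F -> G) (phi_hom : is_hom phi).

Lemma hom1 : phi gone = gone.
Proof. by apply: (mulgI (phi gone)); rewrite -phi_hom !mulg1. Qed.

Lemma homV x : phi x^-1 = (phi x)^-1.
Proof. by apply: eq_invg_mul; rewrite -phi_hom mulgV hom1. Qed.

Lemma hom_gpow x n : phi (gpow x n) = gpow (phi x) n.
Proof.
  elim/Z.peano_ind: n => [|n IHn|n IHn].
  - by rewrite !gpow0 hom1.
  - by rewrite !gpowS phi_hom IHn.
  - by rewrite !gpowP phi_hom IHn homV.
Qed.

Lemma hom_conjg x y : phi (conjg x y) = conjg (phi x) (phi y).
Proof. by rewrite /conjg !phi_hom homV. Qed.

End Homomorphisms.

Definition additive {F : group} (e : F -> Z) : Prop :=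
  forall x y, e (x ** y) = (e x + e y)%Z.

Section Additive.
Context {F : group} (e : F -> Z) (e_add : additive e).

Lemma additive1 : e gone = 0%Z.
Proof. by have := e_add gone gone; rewrite gmul1l; lia. Qed.

Lemma additiveV x : e x^-1 = (- e x)%Z.
Proof. by have := e_add x^-1 x; rewrite gmulVl additive1; lia. Qed.

Lemma additive_gpow x n : e (gpow x n) = (n * e x)%Z.
Proof.
  elim/Z.peano_ind: n => [|n IHn|n IHn].
  - by rewrite gpow0 additive1.
  - by rewrite gpowS e_add IHn; lia.
  - by rewrite gpowP e_add IHn additiveV; lia.
Qed.

Lemma additive_conjg x y : e (conjg x y) = e y.
Proof. by rewrite /conjg !e_add additiveV; lia. Qed.

End Additive.

Section Congruence.
Context {G : group} {K : G -> Prop} (K_sub : is_subgroup K).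

Lemma subg1 : K gone.
Proof. by case: K_sub. Qed.

Lemma subgM x y : K x -> K y -> K (x ** y).
Proof. by case: K_sub => _ [KM _]; apply: KM. Qed.

Lemma subgV x : K x -> K x^-1.
Proof. by case: K_sub => _ [_ KV]; apply: KV. Qed.

Definition lcong (x y : G) : Prop := K (x^-1 ** y).

Lemma lcong_refl x : lcong x x.
Proof. by rewrite /lcong gmulVl; apply: subg1. Qed.

Lemma lcong_sym {x y} : lcong x y -> lcong y x.
Proof. by rewrite /lcong => /subgV; rewrite invMg invgK. Qed.

Lemma lcong_trans {x y z} : lcong x y -> lcong y z -> lcong x z.
Proof. by rewrite /lcong => Kxy Kyz; have := subgM _ _ Kxy Kyz; rewrite -gmulA mulKVg. Qed.

Lemma lcong_subg x y : K x -> lcong x y -> K y.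
Proof. by rewrite /lcong => Kx Kxy; have := subgM _ _ Kx Kxy; rewrite mulKVg. Qed.

Lemma lcong_mul2l z x y : lcong (z ** x) (z ** y) <-> lcong x y.
Proof. by rewrite /lcong invMg -gmulA mulKg. Qed.

Lemma lcong_mulr x h : K h -> lcong x (x ** h).
Proof. by rewrite /lcong mulKg. Qed.

Lemma lcong_invl c x : lcong (c ** x) x -> lcong (c^-1 ** x) x.
Proof. by rewrite /lcong => /subgV; rewrite !invMg !invgK gmulA. Qed.

Lemma lcong_gpow a c : (forall m, lcong (c ** gpow a m) (gpow a m)) ->
  forall n, lcong (gpow (a ** c) n) (gpow a n).
Proof.
  move=> c_a; elim/Z.peano_ind => [|n IHn|n IHn].
  - by rewrite !gpow0; apply: lcong_refl.
  - rewrite !gpowSl -gmulA lcong_mul2l.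
    by apply: lcong_trans (c_a n); rewrite lcong_mul2l.
  - rewrite !gpowPl invMg -gmulA.
    apply: (@lcong_trans _ (c^-1 ** (a^-1 ** gpow a n))).
      by rewrite !lcong_mul2l.
    by rewrite -gpowPl; apply: lcong_invl.
Qed.

Hypothesis K_normal : forall x y, K x -> K (conjg y x).

Lemma lcong_mul x x' y y' : lcong x x' -> lcong y y' -> lcong (x ** y) (x' ** y').
Proof.
  rewrite /lcong => Kx Ky.
  have := subgM _ _ (K_normal _ y^-1 Kx) Ky.
  by rewrite /conjg invgK invMg !gmulA mulgK.
Qed.

Lemma lcong_inv x x' : lcong x x' -> lcong x^-1 x'^-1.
Proof.
  rewrite /lcong invgK => Kx; have := K_normal _ x (subgV _ Kx).
  by rewrite /conjg invMg invgK !gmulA mulgK.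
Qed.

End Congruence.

Arguments lcong {G} K x y.

(** * Sets partitioned into copies of a set *)

Lemma bijective_of_inj_surj {A B : Type} (f : A -> B) :
  (forall x y, f x = f y -> x = y) -> (forall y, exists x, f x = y) -> bijective f.
Proof.
  move=> f_inj f_surj.
  pose f_inv y := proj1_sig (constructive_indefinite_description _ (f_surj y)).
  have f_invK y : f (f_inv y) = y.
    by rewrite /f_inv; case: constructive_indefinite_description.
  by exists f_inv => [x|y]; [apply: f_inj; rewrite f_invK | apply: f_invK].
Qed.

Section Classes.
Variables (A S : Type) (R : S -> S -> Prop) (b : S -> A -> S).
Hypotheses (R_refl : forall x, R x x) (R_sym : forall x y, R x y -> R y x)
  (R_trans : forall x y z, R x y -> R y z -> R x z).
Hypotheses (b_class : forall x a, R x (b x a))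
  (b_inj : forall x a a', b x a = b x a' -> a = a')
  (b_onto : forall x y, R x y -> exists a, b x a = y).

Definition class_rep (x : S) : S := epsilon (inhabits x) (R x).

Lemma class_repP x : R x (class_rep x).
Proof. by apply: epsilon_spec; exists x; apply: R_refl. Qed.

Lemma class_rep_eq x y : R x y -> class_rep x = class_rep y.
Proof.
  move=> Rxy; rewrite /class_rep (proof_irrelevance _ (inhabits x) (inhabits y)).
  congr epsilon; apply: functional_extensionality => z.
  by apply: propositional_extensionality; split; apply: R_trans; [apply: R_sym|].
Qed.

(* Each class is a copy of [A], so [S] is [A] times the set of class representatives. *)
Lemma card_divides_classes : card_divides A S.
Proof.
  exists {x : S | class_rep x = x}, (fun p => b (proj1_sig p.2) p.1).
  apply: bijective_of_inj_surj => [[a [x rep_x]] [a' [x' rep_x']] /= E | y].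
  - have Rxx' : R x x' by apply: R_trans (b_class x a) _; rewrite E; apply: R_sym.
    have E_x : x = x' by rewrite -rep_x -rep_x'; apply: class_rep_eq.
    subst x'; rewrite (proof_irrelevance _ rep_x rep_x').
    by rewrite (b_inj _ _ _ E).
  - have rep_rep : class_rep (class_rep y) = class_rep y.
      by symmetry; apply: class_rep_eq; apply: class_repP.
    have [a E] := b_onto (class_rep y) y (R_sym _ _ (class_repP y)).
    by exists (a, exist (fun x => class_rep x = x) (class_rep y) rep_rep).
Qed.

End Classes.

(** * Homomorphisms linked through [H] *)

Section Counting.
Context {F G : group} {H : G -> Prop} {W : F -> Prop} (g : {w : F | W w} -> G).
Hypothesis H_sub : is_subgroup H.
Context {eps : F -> Z} {t : F}.
Hypotheses (eps_add : additive eps) (eps_t : eps t = 1%Z).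

Local Notation lc := (lcong H).
Local Notation ker_eps k := (eps k = 0%Z).

Definition ker_part (f : F) : F := f ** gpow t (- eps f).

Lemma eps_ker_part f : ker_eps (ker_part f).
Proof. by rewrite /ker_part eps_add (additive_gpow _ eps_add) eps_t; lia. Qed.

Lemma ker_partK f : ker_part f ** gpow t (eps f) = f.
Proof. by rewrite /ker_part -gmulA -gpowD Z.add_opp_diag_l gpow0 mulg1. Qed.

Lemma ker_part_id k : ker_eps k -> ker_part k = k.
Proof. by move=> k0; rewrite /ker_part k0 gpow0 mulg1. Qed.

Lemma ker_partM f f' :
  ker_part (f ** f') = ker_part f ** conjg (gpow t (eps f)) (ker_part f').
Proof.
  rewrite /ker_part /conjg eps_add -gpowN !gmulA -(gmulA _ (gpow t (- eps f))).
  rewrite -gpowD Z.add_opp_diag_l gpow0 mulg1 -!gmulA -!gpowD.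
  by rewrite Z.opp_add_distr Z.add_comm.
Qed.

(* [F] is generated by [ker eps] and [t]. *)
Lemma hom_eq_ker_t (phi psi : F -> G) : is_hom phi -> is_hom psi ->
  (forall k, ker_eps k -> phi k = psi k) -> phi t = psi t -> forall f, phi f = psi f.
Proof.
  move=> phi_hom psi_hom phi_psi_ker phi_psi_t f.
  rewrite -(ker_partK f) phi_hom psi_hom (hom_gpow phi) // (hom_gpow psi) // phi_psi_t.
  by rewrite phi_psi_ker ?eps_ker_part.
Qed.

Definition twist (phi : F -> G) (c : G) (f : F) : G :=
  phi (ker_part f) ** gpow (phi t ** c) (eps f).

Section Twist.
Variables (phi : F -> G) (c : G).
Hypothesis phi_hom : is_hom phi.
Hypothesis c_centralizes : forall k, ker_eps k -> c ** phi k = phi k ** c.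

Lemma conjg_twist_pow n k : ker_eps k ->
  conjg (gpow (phi t ** c) n) (phi k) = phi (conjg (gpow t n) k).
Proof.
  have step k' : ker_eps k' -> conjg (phi t ** c) (phi k') = phi (conjg t k').
    by move=> k'0; rewrite conjgM (conjg_fix _ _ (c_centralizes _ k'0)) (hom_conjg phi phi_hom).
  have ker_conjg x k' : ker_eps k' -> ker_eps (conjg x k').
    by rewrite (additive_conjg _ eps_add).
  elim/Z.peano_ind: n k => [|n IHn|n IHn] k k0.
  - by rewrite !gpow0 !conjg1.
  - by rewrite !gpowS conjgM step // IHn ?ker_conjg // conjgM.
  - rewrite !gpowP conjgM -{1}(conjgKV t k) -step ?ker_conjg // conjgK.
    by rewrite IHn ?ker_conjg // conjgM.
Qed.

Lemma twist_hom : is_hom (twist phi c).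
Proof.
  move=> f f'; rewrite /twist ker_partM phi_hom -conjg_twist_pow ?eps_ker_part //.
  by rewrite eps_add gpowD /conjg !gmulA mulgKV.
Qed.

Lemma twist_ker k : ker_eps k -> twist phi c k = phi k.
Proof. by move=> k0; rewrite /twist ker_part_id // k0 gpow0 mulg1. Qed.

Lemma twist_t : twist phi c t = phi t ** c.
Proof.
  have t_ker_part : ker_part t = gone by rewrite /ker_part eps_t gpowN gpow1 mulgV.
  by rewrite /twist t_ker_part hom1 // gmul1l eps_t gpow1.
Qed.

Lemma twist_lcong : (forall f, lc (c ** phi f) (phi f)) -> forall f, lc (twist phi c f) (phi f).
Proof.
  move=> c_phi f; rewrite /twist -{3}(ker_partK f) phi_hom (hom_gpow phi phi_hom).
  rewrite lcong_mul2l.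
  by apply: lcong_gpow => // m; rewrite -hom_gpow.
Qed.

End Twist.

Definition link (phi psi : F -> G) (h : G) : Prop :=
  [/\ H h, forall k, ker_eps k -> psi k = conjg h (phi k) & forall f, lc (psi f) (h ** phi f)].

Lemma link_refl phi : link phi phi gone.
Proof.
  split=> [|k _|f]; [exact: subg1 | by rewrite conjg1 |].
  by rewrite gmul1l; apply: lcong_refl.
Qed.

Lemma link_sym {phi psi h} : link phi psi h -> link psi phi h^-1.
Proof.
  case=> Hh psi_ker psi_lc; split=> [|k k0|f]; first exact: subgV.
  - by rewrite psi_ker // conjgK.
  - by apply: lcong_sym => //; rewrite -(lcong_mul2l h) mulKVg; apply: psi_lc.
Qed.

Lemma link_trans {phi psi chi h h'} :
  link phi psi h -> link psi chi h' -> link phi chi (h' ** h).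
Proof.
  case=> Hh psi_ker psi_lc [Hh' chi_ker chi_lc]; split=> [|k k0|f]; first exact: subgM.
  - by rewrite chi_ker // psi_ker // conjgM.
  - by apply: lcong_trans (chi_lc f) _ => //; rewrite -gmulA lcong_mul2l.
Qed.

Lemma link_conjg phi {s} : H s -> link phi (fun f => conjg s (phi f)) s.
Proof.
  move=> Hs; split=> // f; apply: lcong_sym => //.
  by apply: lcong_mulr => //; apply: subgV.
Qed.

Lemma link_centralizes {phi c k} : link phi phi c -> ker_eps k -> c ** phi k = phi k ** c.
Proof. by case=> _ phi_ker _ k0; rewrite {2}(phi_ker k k0) /conjg mulgKV. Qed.

Lemma link_twist {phi c} : is_hom phi -> link phi phi c -> link phi (twist phi c) c.
Proof.
  move=> phi_hom phi_c; have [Hc phi_ker phi_lc] := phi_c.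
  have c_centralizes k : ker_eps k -> c ** phi k = phi k ** c by apply: link_centralizes.
  split=> // [k k0|f]; first by rewrite twist_ker //; apply: phi_ker.
  apply: lcong_trans (phi_lc f) => //; apply: twist_lcong => // f'.
  exact: lcong_sym.
Qed.

Definition double_coset_cond (phi : F -> G) : Prop :=
  forall w : {w : F | W w}, in_double_coset H (g w) (phi (proj1_sig w)).

Lemma double_coset_cond_link {phi psi h} :
  link phi psi h -> double_coset_cond phi -> double_coset_cond psi.
Proof.
  case=> Hh _ psi_lc phi_dc w; have [h1 [h2 [Hh1 [Hh2 E]]]] := phi_dc w.
  set x := proj1_sig w in E *.
  exists (h ** h1), (h2 ** ((h ** phi x)^-1 ** psi x)).
  have Hpsi : H ((h ** phi x)^-1 ** psi x) by apply: (lcong_sym H_sub); apply: psi_lc.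
  split; [exact: subgM | split; first exact: subgM].
  have -> : h ** h1 ** g w = h ** (h1 ** g w ** h2) ** h2^-1 by rewrite !gmulA mulgK.
  by rewrite E -gmulA mulKg mulKVg.
Qed.

Section Parametrization.
Variable phi0 : F -> G.
Hypothesis phi0_hom : is_hom phi0.

Local Notation stab := (link phi0 phi0).

Lemma stab_subgroup : is_subgroup stab.
Proof.
  split; first exact: link_refl.
  by split=> [x y sx sy|x sx]; [apply: link_trans sy sx | apply: link_sym].
Qed.

Definition coset_rep (h : G) : G :=
  epsilon (inhabits gone) (fun s => H s /\ lcong stab s h).

Lemma coset_repP {h} : H h -> H (coset_rep h) /\ stab ((coset_rep h)^-1 ** h).
Proof.
  move=> Hh; apply: (epsilon_spec _ (fun s => H s /\ lcong stab s h)).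
  by exists h; split; last exact: lcong_refl stab_subgroup h.
Qed.

Lemma coset_rep_eq {h h'} : lcong stab h h' -> coset_rep h = coset_rep h'.
Proof.
  move=> hh'; rewrite /coset_rep; congr epsilon.
  apply: functional_extensionality => s; apply: propositional_extensionality.
  split=> -[Hs sh]; split=> //.
  - exact (lcong_trans stab_subgroup sh hh').
  - exact (lcong_trans stab_subgroup sh (lcong_sym stab_subgroup hh')).
Qed.

Definition linked_hom (h : G) (f : F) : G :=
  conjg (coset_rep h) (twist phi0 ((coset_rep h)^-1 ** h) f).

Lemma link_linked_hom {h} : H h -> link phi0 (linked_hom h) h.
Proof.
  move=> Hh; have [Hs stab_c] := coset_repP Hh.
  rewrite -{2}(mulKVg (coset_rep h) h).
  exact: link_trans (link_twist phi0_hom stab_c) (link_conjg _ Hs).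
Qed.

Lemma linked_hom_is_hom h : H h -> is_hom (linked_hom h).
Proof.
  move=> Hh f f'; have [_ stab_c] := coset_repP Hh.
  rewrite /linked_hom (twist_hom _ _ phi0_hom) ?conjg_is_hom // => k k0.
  exact: link_centralizes.
Qed.

Lemma linked_hom_inj h h' : H h -> H h' -> linked_hom h = linked_hom h' -> h = h'.
Proof.
  move=> Hh Hh' linked_hh'; have [_ stab_c] := coset_repP Hh; have [_ stab_c'] := coset_repP Hh'.
  have stab_hh' : stab (h^-1 ** h').
    apply: link_trans (link_linked_hom Hh') _.
    by rewrite -linked_hh'; apply: link_sym; apply: link_linked_hom.
  have := f_equal (fun psi => conjg (coset_rep h)^-1 (psi t)) linked_hh'.
  rewrite /linked_hom -(coset_rep_eq stab_hh') !conjgK.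
  rewrite !twist_t ?(link_centralizes stab_c) ?(link_centralizes stab_c') //.
  by move=> /mulgI /mulgI.
Qed.

Lemma link1_twist {psi} : is_hom psi -> link phi0 psi gone ->
  let c := (phi0 t)^-1 ** psi t in stab c /\ psi = twist phi0 c.
Proof.
  move=> psi_hom [_ psi_ker psi_lc] c.
  have psi_t : psi t = phi0 t ** c by rewrite /c mulKVg.
  have psi_lc' f : lcong H (psi f) (phi0 f) by have := psi_lc f; rewrite gmul1l.
  have stab_c : stab c.
  { split=> [|k k0|f].
    - by have := lcong_sym H_sub (psi_lc' t); rewrite /lcong -/c.
    - have tk0 : ker_eps (conjg t k) by rewrite (additive_conjg _ eps_add).
      have := f_equal (conjg (phi0 t)^-1) (psi_ker _ tk0).
      rewrite (hom_conjg _ psi_hom) (hom_conjg _ phi0_hom) psi_t psi_ker // !conjg1 conjgM.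
      by rewrite !conjgK => ->.
    - apply: lcong_sym => //; apply: lcong_trans (_ : lcong H (c ** phi0 f) (c ** psi f)) _ => //.
        by rewrite lcong_mul2l; apply: lcong_sym.
      rewrite -(lcong_mul2l (phi0 t)) gmulA -psi_t -psi_hom -phi0_hom.
      exact: psi_lc'. }
  split=> //; apply: functional_extensionality; apply: hom_eq_ker_t => //.
  - exact: twist_hom (fun k k0 => link_centralizes stab_c k0).
  - by move=> k k0; rewrite twist_ker // psi_ker // conjg1.
  - by rewrite twist_t.
Qed.

Lemma linked_hom_onto {psi h} :
  is_hom psi -> link phi0 psi h -> exists2 h', H h' & linked_hom h' = psi.
Proof.
  move=> psi_hom link_h; have Hh : H h by case: link_h.
  have [Hs stab_q] := coset_repP Hh; set s := coset_rep h in Hs stab_q.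
  set psi' := fun f => conjg s^-1 (psi f).
  have psi'_hom : is_hom psi' by move=> f f'; rewrite /psi' psi_hom conjg_is_hom.
  have link_psi' : link phi0 psi' gone.
    rewrite -(mulgV (s^-1 ** h)).
    exact: link_trans (link_sym stab_q) (link_trans link_h (link_conjg _ (subgV H_sub _ Hs))).
  have [stab_c psi'_twist] := link1_twist psi'_hom link_psi'.
  set c := (phi0 t)^-1 ** psi' t in stab_c psi'_twist.
  exists (s ** c); first by apply: subgM => //; case: stab_c.
  have rep_sc : coset_rep (s ** c) = s.
    symmetry; apply: coset_rep_eq; rewrite /lcong.
    have -> : h^-1 ** (s ** c) = (s^-1 ** h)^-1 ** c by rewrite invMg invgK gmulA.
    exact: link_trans stab_c (link_sym stab_q).
  apply: functional_extensionality => f.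
  by rewrite /linked_hom rep_sc mulKg -psi'_twist /psi' conjgKV.
Qed.

End Parametrization.

Lemma card_divides_hom_double_coset_cond :
  card_divides {h : G | H h} {phi : F -> G | is_hom phi /\ double_coset_cond phi}.
Proof.
  pose S := {phi : F -> G | is_hom phi /\ double_coset_cond phi}.
  have linked_hom_in (x : S) (a : {h : G | H h}) :
      let psi := linked_hom (proj1_sig x) (proj1_sig a) in is_hom psi /\ double_coset_cond psi.
    case: x a => phi [phi_hom phi_dc] [h Hh] /=; split; first exact: linked_hom_is_hom.
    by apply: double_coset_cond_link phi_dc; apply: link_linked_hom.
  apply: (@card_divides_classes _ S
            (fun x y : S => exists h, link (proj1_sig x) (proj1_sig y) h)
            (fun x a => exist _ _ (linked_hom_in x a))).
  - by move=> x; exists gone; apply: link_refl.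
  - by move=> x y [h xy]; exists h^-1; apply: link_sym.
  - by move=> x y z [h xy] [h' yz]; exists (h' ** h); apply: link_trans xy yz.
  - move=> [phi [phi_hom phi_dc]] [h Hh] /=; exists h; exact: link_linked_hom.
  - move=> [phi [phi_hom phi_dc]] [h Hh] [h' Hh'] /(f_equal (@proj1_sig _ _)) /= E.
    by apply: subset_eq_compat; apply: linked_hom_inj E.
  - move=> [phi [phi_hom phi_dc]] [psi [psi_hom psi_dc]] /= [h link_h].
    have [h' Hh' E] := linked_hom_onto _ phi_hom psi_hom link_h.
    by exists (exist _ h' Hh'); apply: subset_eq_compat.
Qed.

End Counting.

(** * Subgroups of [Z^m] *)

Section IntegerVectors.
Local Open Scope Z_scope.
Implicit Types (m : nat) (l v w : nat -> Z) (R : (nat -> Z) -> Prop).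

Fixpoint dot m l v : Z := if m is S m then dot m l v + l m * v m else 0.

Definition unitv (i j : nat) : Z := if Nat.eqb j i then 1 else 0.

Lemma dot_ext m l v w : (forall i, (i < m)%nat -> v i = w i) -> dot m l v = dot m l w.
Proof. by elim: m => [|m IHm] vw //=; rewrite IHm ?vw // => i i_lt; apply: vw; lia. Qed.

Lemma dot_extl m l l' v : (forall i, (i < m)%nat -> l i = l' i) -> dot m l v = dot m l' v.
Proof. by elim: m => [|m IHm] ll' //=; rewrite IHm ?ll' // => i i_lt; apply: ll'; lia. Qed.

Lemma dot_lin m l a b v w :
  dot m l (fun i => a * v i + b * w i) = a * dot m l v + b * dot m l w.
Proof. by elim: m => [|m IHm] /=; [|rewrite IHm]; ring. Qed.

Lemma dot_scalel m a l v : dot m (fun j => a * l j) v = a * dot m l v.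
Proof. by elim: m => [|m IHm] /=; [|rewrite IHm]; ring. Qed.

Lemma dot0l m v : dot m (fun _ => 0) v = 0.
Proof. by elim: m => [|m IHm] /=; [|rewrite IHm]; ring. Qed.

Lemma dot0r m l : dot m l (fun _ => 0) = 0.
Proof. by elim: m => [|m IHm] /=; [|rewrite IHm]; ring. Qed.

Lemma dot_unitv m l i : (i < m)%nat -> dot m l (unitv i) = l i.
Proof.
  elim: m => [|m IHm] i_lt /=; first lia.
  case: (Nat.eq_dec m i) => [<-|m_i].
  - have -> : dot m l (unitv m) = 0.
      rewrite (dot_ext _ _ _ (fun _ => 0)) ?dot0r // => j j_lt.
      by rewrite /unitv; case: Nat.eqb_spec; lia.
    by rewrite /unitv Nat.eqb_refl; ring.
  - have -> : unitv i m = 0 by rewrite /unitv; case: Nat.eqb_spec.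
    by rewrite IHm; [lia | ring].
Qed.

Lemma dot_unitvl m v : dot m (unitv m) v = 0.
Proof.
  rewrite (dot_extl _ _ (fun _ => 0)) ?dot0l // => i i_lt.
  by rewrite /unitv; case: Nat.eqb_spec; lia.
Qed.

(* Only the first [m] coordinates of a vector [nat -> Z] matter. *)
Definition zsubmodule m R : Prop :=
  [/\ forall v w, R v -> R w -> R (fun i => v i + w i),
      forall a v, R v -> R (fun i => a * v i)
    & forall v w, (forall i, (i < m)%nat -> v i = w i) -> R v -> R w].

Lemma zsubmoduleP m R :
  R (fun _ => 0) ->
  (forall v w, R v -> R w -> R (fun i => v i + w i)) ->
  (forall v, R v -> R (fun i => - v i)) ->
  (forall v w, (forall i, (i < m)%nat -> v i = w i) -> R v -> R w) ->
  zsubmodule m R.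
Proof.
  move=> R0 RD RN Rext; split=> // a v Rv; elim/Z.peano_ind: a.
  - by apply: Rext R0 => i _; ring.
  - by move=> a Ra; apply: Rext (RD _ _ Ra Rv) => i _; rewrite /Z.succ; ring.
  - by move=> a Ra; apply: Rext (RD _ _ Ra (RN _ Rv)) => i _; rewrite /Z.pred; ring.
Qed.

Section Zsubmodule.
Context {m : nat} {R : (nat -> Z) -> Prop}.
Hypothesis R_sub : zsubmodule m R.

Lemma zsubmodule_ext {v w} : R v -> (forall i, v i = w i) -> R w.
Proof. by case: R_sub => _ _ Rext Rv vw; apply: Rext Rv => i _. Qed.

Lemma zsubmodule_multiples {N k v} : R v ->
  (forall i, (i < k)%nat -> R (fun j => N * unitv i j)) ->
  forall q, R (fun j => if Nat.ltb j k then N * q j else 0).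
Proof.
  case: R_sub => RD RZ _ Rv RN q.
  elim: k RN => [|k IHk] RN.
  - by apply: (zsubmodule_ext (RZ 0 _ Rv)) => j /=; ring.
  - have Rk := IHk (fun i i_lt => RN i ltac:(lia)).
    have Rqk := RZ (q k) _ (RN k (Nat.lt_succ_diag_r k)).
    apply: (zsubmodule_ext (RD _ _ Rk Rqk)) => j; rewrite /unitv.
    case: (Nat.ltb_spec j k); case: (Nat.ltb_spec j (S k)); case: (Nat.eqb_spec j k) => *;
      try lia; subst; ring.
Qed.

End Zsubmodule.

Section EliminateLast.
Context {m : nat} {R : (nat -> Z) -> Prop} {r0 : nat -> Z}.
Hypotheses (R_sub : zsubmodule (S m) R) (R_r0 : R r0) (r0_m : r0 m <> 0).

(* The vectors of [R] with vanishing last coordinate [r0 m * r - r m * r0], seen in [Z^m]. *)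
Definition eliminate_last (u : nat -> Z) : Prop :=
  exists2 r, R r & forall i, (i < m)%nat -> u i = r0 m * r i - r m * r0 i.

Lemma eliminate_last_in {r} : R r -> R (fun i => r0 m * r i - r m * r0 i).
Proof.
  case: R_sub => RD RZ _ Rr.
  by apply: (zsubmodule_ext R_sub (RD _ _ (RZ (r0 m) _ Rr) (RZ (- r m) _ R_r0))) => i; ring.
Qed.

Lemma eliminate_last_zsubmodule : zsubmodule m eliminate_last.
Proof.
  case: R_sub => RD RZ _; split.
  - move=> v w [r Rr vr] [r' Rr' wr']; exists (fun i => r i + r' i); first exact: RD.
    by move=> i i_lt; rewrite vr ?wr' //; ring.
  - move=> a v [r Rr vr]; exists (fun i => a * r i); first exact: RZ.
    by move=> i i_lt; rewrite vr //; ring.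
  - by move=> v w vw [r Rr vr]; exists r => // i i_lt; rewrite -vw // vr.
Qed.

Lemma eliminate_last_finite {N} : 0 < N ->
  (forall i, (i < m)%nat -> eliminate_last (fun j => N * unitv i j)) ->
  exists2 N', 0 < N' & forall i, (i < S m)%nat -> R (fun j => N' * unitv i j).
Proof.
  move=> N_gt0 RN; have [RD RZ Rext] := R_sub.
  have RNe i : (i < m)%nat -> R (fun j => N * unitv i j).
  { move=> i_lt; have [r Rr Nr] := RN i i_lt.
    move: (eliminate_last_in Rr); apply: Rext => j j_lt; case: (Nat.eq_dec j m) => [->|j_m].
    - by rewrite /unitv; case: Nat.eqb_spec; [lia | move=> _; ring].
    - by rewrite Nr //; lia. }
  have RNdm : R (fun j => N * r0 m * unitv m j).
    have := zsubmodule_multiples R_sub R_r0 RNe r0.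
    move=> /(RZ (-1)) /(RD _ _ (RZ N _ R_r0)); apply: Rext => j j_lt; rewrite /unitv.
    by case: (Nat.ltb_spec j m); case: (Nat.eqb_spec j m) => *; try lia; subst; ring.
  exists (N * r0 m * r0 m); first by have := Z.mul_pos_pos N (r0 m * r0 m); nia.
  move=> i i_lt; case: (Nat.eq_dec i m) => [->|i_m].
  - by apply: (zsubmodule_ext R_sub (RZ (r0 m) _ RNdm)) => j; ring.
  - by apply: (zsubmodule_ext R_sub (RZ (r0 m * r0 m) _ (RNe i ltac:(lia)))) => j; ring.
Qed.

Lemma eliminate_last_functional {l i0} : (i0 < m)%nat -> l i0 <> 0 ->
  (forall v, eliminate_last v -> dot m l v = 0) ->
  exists l', (exists2 i, (i < S m)%nat & l' i <> 0) /\ forall v, R v -> dot (S m) l' v = 0.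
Proof.
  move=> i0_lt l_i0 l_R.
  exists (fun j => if Nat.ltb j m then r0 m * l j else - dot m l r0); split.
    by exists i0; [lia | case: Nat.ltb_spec; [nia | lia]].
  move=> v Rv /=; rewrite Nat.ltb_irrefl.
  rewrite (dot_extl _ _ (fun j => r0 m * l j)) ?dot_scalel.
    by move=> j j_lt; case: Nat.ltb_spec; lia.
  have elim_v : eliminate_last (fun i => r0 m * v i + - v m * r0 i) by exists v => // i _; ring.
  by have := l_R _ elim_v; rewrite dot_lin => <-; ring.
Qed.

End EliminateLast.

Lemma zsubmodule_dichotomy {m R} : zsubmodule m R ->
  (exists2 N, 0 < N & forall i, (i < m)%nat -> R (fun j => N * unitv i j)) \/
  (exists l, (exists2 i, (i < m)%nat & l i <> 0) /\ forall v, R v -> dot m l v = 0).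
Proof.
  elim: m R => [|m IHm] R R_sub.
    by left; exists 1 => [|i]; lia.
  case: (classic (exists2 r0, R r0 & r0 m <> 0)) => [[r0 R_r0 r0_m]|R_m].
  - case: (IHm _ (@eliminate_last_zsubmodule _ _ r0 R_sub))
      => [[N N_gt0 RN]|[l [[i0 i0_lt l_i0] l_R]]].
    + by left; exact (eliminate_last_finite R_sub R_r0 r0_m N_gt0 RN).
    + by right; exact (eliminate_last_functional r0_m i0_lt l_i0 l_R).
  - right; exists (unitv m); split; first by exists m; rewrite /unitv ?Nat.eqb_refl; lia.
    move=> v Rv /=; rewrite dot_unitvl /unitv Nat.eqb_refl.
    by case: (Z.eq_dec (v m) 0) => [->|v_m]; [ring | case: R_m; exists v].
Qed.

End IntegerVectors.

(** * Homomorphisms onto [Z] *)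

Lemma generated_subgroup {G : group} (S : G -> Prop) : is_subgroup (generated S).
Proof.
  split=> [K [K1 _] _ //|]; split=> [x y Sx Sy K K_sub SK|x Sx K K_sub SK].
  - by apply: subgM K_sub _ _ (Sx K K_sub SK) (Sy K K_sub SK).
  - by apply: subgV K_sub _ (Sx K K_sub SK).
Qed.

Lemma hom_commutator {F G : group} (phi : F -> G) : is_hom phi ->
  forall a b, phi (commutator a b) = commutator (phi a) (phi b).
Proof. by move=> phi_hom a b; rewrite /commutator !phi_hom !(homV _ phi_hom). Qed.

Section Derived.
Context {F : group}.

Lemma derived_subgroup : is_subgroup (derived F).
Proof. exact: generated_subgroup. Qed.

Lemma commutator_derived a b : derived F (commutator a b).
Proof. by move=> K _ K_comm; apply: K_comm; exists a, b. Qed.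

Lemma derived_normal x y : derived F x -> derived F (conjg y x).
Proof.
  move=> Dx; apply: (Dx (fun z => forall y, derived F (conjg y z))) => [|c [a [b ->]] y'].
  - split=> [y'|]; first by rewrite /conjg mulg1 mulgV; apply: subg1 derived_subgroup.
    split=> [u v Du Dv y'|u Du y'].
    + by rewrite (conjg_is_hom y'); apply: subgM derived_subgroup _ _ (Du y') (Dv y').
    + by rewrite (homV _ (conjg_is_hom y')); apply: subgV derived_subgroup _ (Du y').
  - by rewrite (hom_commutator _ (conjg_is_hom y')); apply: commutator_derived.
Qed.

Local Notation cg := (lcong (derived F)).

Lemma cg_mul {x x' y y'} : cg x x' -> cg y y' -> cg (x ** y) (x' ** y').
Proof. exact: lcong_mul derived_subgroup derived_normal x x' y y'. Qed.

Lemma cg_inv {x x'} : cg x x' -> cg x^-1 x'^-1.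
Proof. exact: lcong_inv derived_subgroup derived_normal x x'. Qed.

Lemma cg_commute x y : cg (x ** y) (y ** x).
Proof. by rewrite /lcong invMg !gmulA; apply: commutator_derived. Qed.

End Derived.

Section Monomials.
Context {F : group} (s : list F).
Local Notation cg := (lcong (derived F)).

Definition gen (i : nat) : F := nth i s gone.

Fixpoint monomial (k : nat) (v : nat -> Z) : F :=
  if k is S k then monomial k v ** gpow (gen k) (v k) else gone.

Lemma monomial_ext k v w : (forall i, (i < k)%nat -> v i = w i) -> monomial k v = monomial k w.
Proof. by elim: k => [|k IHk] vw //=; rewrite IHk ?vw // => i i_lt; apply: vw; lia. Qed.

Lemma monomial0 k : monomial k (fun _ => 0%Z) = gone.
Proof. by elim: k => [|k IHk] //=; rewrite IHk gpow0 mulg1. Qed.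

Lemma monomialD k v w : cg (monomial k v ** monomial k w) (monomial k (fun i => v i + w i)%Z).
Proof.
  have cg_refl x : cg x x by exact: (lcong_refl derived_subgroup x).
  elim: k => [|k IHk] /=; first by rewrite mulg1; apply: cg_refl.
  set a := gpow (gen k) (v k); set b := gpow (gen k) (w k); rewrite gpowD -/a -/b.
  apply: (lcong_trans derived_subgroup (y := monomial k v ** (monomial k w ** a) ** b)).
  - rewrite !gmulA -(gmulA (monomial k v) a) -(gmulA (monomial k v) (monomial k w)).
    exact: (cg_mul (cg_mul (cg_refl _) (cg_commute _ _)) (cg_refl _)).
  - by rewrite !gmulA; exact: (cg_mul (cg_mul IHk (cg_refl _)) (cg_refl _)).
Qed.

Lemma monomialN k v : cg (monomial k v)^-1 (monomial k (fun i => - v i)%Z).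
Proof.
  elim: k => [|k IHk] /=; first by rewrite invg1; exact: (lcong_refl derived_subgroup gone).
  rewrite invMg gpowN.
  exact (lcong_trans derived_subgroup (cg_commute _ _)
    (cg_mul IHk (lcong_refl derived_subgroup _))).
Qed.

Lemma monomial_unitv k i : (i < k)%nat -> monomial k (unitv i) = gen i.
Proof.
  elim: k => [|k IHk] i_lt /=; first lia.
  case: (Nat.eq_dec i k) => [<-|i_k].
  - rewrite (monomial_ext _ _ (fun _ => 0%Z)) ?monomial0 ?gmul1l.
      by move=> j j_lt; rewrite /unitv; case: Nat.eqb_spec; lia.
    by rewrite /unitv Nat.eqb_refl gpow1.
  - rewrite IHk; first lia.
    by rewrite /unitv; case: Nat.eqb_spec => [|_]; [lia | rewrite gpow0 mulg1].
Qed.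

Definition range (N : Z) : list Z := map Z.of_nat (seq 0 (Z.to_nat N)).

Fixpoint bounded_monomials (N : Z) (k : nat) : list F :=
  if k is S k then
    flat_map (fun y => map (fun a => y ** gpow (gen k) a) (range N)) (bounded_monomials N k)
  else gone :: nil.

Lemma in_bounded_monomials N k v : (forall i, (i < k)%nat -> (0 <= v i < N)%Z) ->
  In (monomial k v) (bounded_monomials N k).
Proof.
  elim: k => [|k IHk] v_bnd /=; first by left.
  apply/in_flat_map; exists (monomial k v); split; first by apply: IHk => i i_lt; apply: v_bnd; lia.
  apply/in_map_iff; exists (v k); split=> //; apply/in_map_iff; exists (Z.to_nat (v k)).
  by have := v_bnd k (Nat.lt_succ_diag_r k); split; [lia | apply/in_seq; lia].
Qed.

End Monomials.

Section Abelianization.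
Context {F : group} (s : list F) (s_gen : forall x : F, generated (fun y => In y s) x).
Local Notation cg := (lcong (derived F)).
Local Notation n := (length s).

Definition relation_vector (v : nat -> Z) : Prop := derived F (monomial s n v).

Lemma relation_vector_zsubmodule : zsubmodule n relation_vector.
Proof.
  apply: zsubmoduleP => [|v w Rv Rw|v Rv|v w vw].
  - by rewrite /relation_vector monomial0; apply: subg1 derived_subgroup.
  - exact: (lcong_subg derived_subgroup _ _ (subgM derived_subgroup _ _ Rv Rw) (monomialD _ _ _ _)).
  - exact: (lcong_subg derived_subgroup _ _ (subgV derived_subgroup _ Rv) (monomialN _ _ _)).
  - by rewrite /relation_vector (monomial_ext _ _ _ _ vw).
Qed.

Lemma monomial_span x : exists v, cg x (monomial s n v).
Proof.
  apply: (s_gen x (fun x => exists v, cg x (monomial s n v))) => [|y y_s].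
  - split.
      by exists (fun _ => 0%Z); rewrite monomial0; exact: (lcong_refl derived_subgroup _).
    split=> [a b [v av] [w bw]|a [v av]].
    + exists (fun i => v i + w i)%Z.
      exact (lcong_trans derived_subgroup (cg_mul av bw) (monomialD _ _ _ _)).
    + exists (fun i => - v i)%Z.
      exact (lcong_trans derived_subgroup (cg_inv av) (monomialN _ _ _)).
  - have [i [i_lt <-]] := In_nth _ _ gone y_s.
    by exists (unitv i); rewrite monomial_unitv //; exact: (lcong_refl derived_subgroup _).
Qed.

Lemma finite_index_of_multiples N : (0 < N)%Z ->
  (forall i, (i < n)%nat -> relation_vector (fun j => N * unitv i j)%Z) ->
  finite_index (derived F).
Proof.
  move=> N_gt0 RN; exists (bounded_monomials s N n) => x.
  have [v xv] := monomial_span x.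
  pose r j := (v j mod N)%Z; pose q j := (v j / N)%Z.
  have R0 : relation_vector (fun _ => 0%Z).
    by rewrite /relation_vector monomial0; apply: subg1 derived_subgroup.
  have Rq : relation_vector (fun j => N * q j)%Z.
    have [_ _ Rext] := relation_vector_zsubmodule.
    apply: Rext (zsubmodule_multiples relation_vector_zsubmodule R0 RN q) => j j_lt.
    by case: Nat.ltb_spec; lia.
  have xr : cg x (monomial s n r).
    have vrq : monomial s n v = monomial s n (fun j => r j + N * q j)%Z.
      by apply: monomial_ext => j _; rewrite /r /q; have := Z_div_mod_eq_full (v j) N; lia.
    apply: (lcong_trans derived_subgroup xv); rewrite vrq.
    apply: (lcong_trans derived_subgroup (lcong_sym derived_subgroup (monomialD _ _ _ _))).
    by rewrite /lcong invMg -gmulA gmulVl mulg1; exact: (subgV derived_subgroup _ Rq).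
  exists (monomial s n r); split.
  - by apply: in_bounded_monomials => j _; apply: Z.mod_pos_bound.
  - exact: (lcong_sym derived_subgroup xr).
Qed.

Lemma relation_vector_diff {v w} :
  cg (monomial s n v) (monomial s n w) -> relation_vector (fun i => - v i + w i)%Z.
Proof.
  move=> vw; apply: (lcong_subg derived_subgroup _ _ vw).
  exact (lcong_trans derived_subgroup
    (cg_mul (monomialN _ _ _) (lcong_refl derived_subgroup _)) (monomialD _ _ _ _)).
Qed.

Section Functional.
Variable l : nat -> Z.
Hypothesis l_rel : forall v, relation_vector v -> dot n l v = 0%Z.

Definition exponents (x : F) : nat -> Z :=
  epsilon (inhabits (fun _ => 0%Z)) (fun v => cg x (monomial s n v)).

Lemma exponentsP x : cg x (monomial s n (exponents x)).
Proof. exact: (epsilon_spec _ (fun v => cg x (monomial s n v)) (monomial_span x)). Qed.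

Definition functional_hom (x : F) : Z := dot n l (exponents x).

Lemma functional_homE x v : cg x (monomial s n v) -> functional_hom x = dot n l v.
Proof.
  move=> xv; have ev := lcong_trans derived_subgroup (lcong_sym derived_subgroup (exponentsP x)) xv.
  have := l_rel _ (relation_vector_diff ev).
  rewrite (dot_ext _ _ _ (fun i => -1 * exponents x i + 1 * v i)%Z) ?dot_lin /functional_hom.
    by move=> i _; ring.
  lia.
Qed.

Lemma functional_hom_additive : additive functional_hom.
Proof.
  move=> x y; rewrite (functional_homE _ (fun i => exponents x i + exponents y i)%Z).
    exact (lcong_trans derived_subgroup (cg_mul (exponentsP x) (exponentsP y)) (monomialD _ _ _ _)).
  rewrite (dot_ext _ _ _ (fun i => 1 * exponents x i + 1 * exponents y i)%Z) ?dot_lin.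
    by move=> i _; ring.
  rewrite /functional_hom; ring.
Qed.

Lemma functional_hom_gen i : (i < n)%nat -> functional_hom (gen s i) = l i.
Proof.
  move=> i_lt; rewrite (functional_homE _ (unitv i)) ?dot_unitv //.
  by rewrite monomial_unitv //; exact: (lcong_refl derived_subgroup _).
Qed.

End Functional.

End Abelianization.

(* Dividing by the least positive value of [e] makes it onto [Z]. *)
Lemma additive_onto_Z {F : group} (e : F -> Z) : additive e -> (exists x0, e x0 <> 0%Z) ->
  exists (eps : F -> Z) (t : F), additive eps /\ eps t = 1%Z.
Proof.
  move=> e_add [x0 ex0].
  pose P n := (0 < n)%nat /\ exists x, e x = Z.of_nat n.
  have [n0 [[[n0_gt0 [t et]] n0_least] _]] : has_unique_least_element le P.
  { apply: dec_inh_nat_subset_has_unique_least_element => [n|]; first exact: classic.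
    exists (Z.to_nat (Z.abs (e x0))); split; first lia.
    case: (Z.leb_spec 0 (e x0)) => e_sgn; first by exists x0; lia.
    by exists x0^-1; rewrite (additiveV _ e_add); lia. }
  set d := Z.of_nat n0 in et.
  have d_gt0 : (0 < d)%Z by rewrite /d; lia.
  have e_div x : e x = (d * (e x / d))%Z.
  { apply: Z_div_exact_full_2; first lia.
    have := Z.mod_pos_bound (e x) d d_gt0; case: (Z.eq_dec (e x mod d) 0) => // r_ne0 r_bnd.
    have : P (Z.to_nat (e x mod d)).
      split; first lia.
      exists (x ** gpow t (- (e x / d))); rewrite e_add (additive_gpow _ e_add) et.
      by have := Z_div_mod_eq_full (e x) d; lia.
    by move=> /n0_least; lia. }
  exists (fun x => e x / d)%Z, t; split.
  - move=> x y; rewrite e_add (e_div x) (e_div y) -Z.mul_add_distr_l.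
    by rewrite !(Z.mul_comm d) !Z.div_mul //; lia.
  - by rewrite et Z.div_same //; lia.
Qed.

Lemma exists_additive_onto_Z {F : group} :
  finitely_generated F -> infinite_index (derived F) ->
  exists (eps : F -> Z) (t : F), additive eps /\ eps t = 1%Z.
Proof.
  move=> [s s_gen] F'_inf.
  case: (zsubmodule_dichotomy (relation_vector_zsubmodule s))
    => [[N N_gt0 RN]|[l [[i i_lt l_i] l_rel]]].
  - by case: F'_inf; apply: finite_index_of_multiples N_gt0 RN.
  - apply: (additive_onto_Z _ (functional_hom_additive _ s_gen _ l_rel)).
    by exists (gen s i); rewrite functional_hom_gen.
Qed.

Theorem mainTheorem3 (G F : group) (H : G -> Prop) (HH : is_subgroup H)
  (W : F -> Prop) (hF : finitely_generated F)
  (hidx : infinite_index (derived F))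
  (g : {w : F | W w} -> G) :
  card_divides {h : G | H h}
    {phi : F -> G | is_hom phi /\
       forall w : {w : F | W w}, in_double_coset H (g w) (phi (proj1_sig w))}.
Proof.
  have [eps [t [eps_add eps_t]]] := exists_additive_onto_Z hF hidx.
  exact (card_divides_hom_double_coset_cond g HH eps_add eps_t).
Qed.
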